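(* Let $D$ be a non-commutative division ring and $R$ a maximal subring of $D$. Assume there exists a nonzero non-unit $a\in R$ with $aR=Ra$. Then: (1) $X=\{1,a,a^2,\ldots\}$ is a left and right Ore set in $R$, and $D=X^{-1}R=\{a^{-n}r: n\ge 0, r\in R\}$ and $D=RX^{-1}=\{ra^{-n}: n\ge 0, r\in R\}$; (2) every nonzero left ideal and every nonzero right ideal of $R$ contains a power of $a$; in particular $u.\dim({}_RR)=u.\dim(R_R)=1$ and $R$ is an Ore domain whose division ring of quotients is $D$; (3) every nonzero prime ideal of $R$ contains $a$; (4) $a\in J(R)$; (5) $R$ is a non-simple $G$-domain; (6) for every $\lambda\in N(R)$, either $\lambda\in R$ or $\lambda^{-1}\in R$.
   Context: All rings are associative unital and subrings share the identity. A maximal subring of a ring $T$ is a proper subring maximal under inclusion among proper subrings of $T$. $J(R)$ is the Jacobson radical, $u.\dim$ is uniform (Goldie) dimension. $N(R)=\{x\in D: xR=Rx\}$. A $G$-domain is a domain in which the intersection of all nonzero prime ideals is nonzero. *)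

(* A division ring is a unitRingType in which every nonzero
   element is a unit; subsets of D (subrings, ideals of a subring) are Prop
   predicates D -> Prop. *)
From mathcomp Require Import all_boot all_algebra.
Set Implicit Arguments. Unset Strict Implicit. Unset Printing Implicit Defensive.
Import GRing.Theory.
Local Open Scope ring_scope.

Section Defs.
Variable D : unitRingType.

Definition is_division_ring : Prop := forall x : D, x != 0 -> x \is a GRing.unit.
Definition noncommutative : Prop := exists x y : D, x * y != y * x.

Definition is_subring (S : D -> Prop) : Prop :=
  S 1 /\ (forall x y, S x -> S y -> S (x - y)) /\ (forall x y, S x -> S y -> S (x * y)).

Definition maximal_subring (R : D -> Prop) : Prop :=
  is_subring R /\ (exists x, ~ R x) /\
  forall S, is_subring S -> (forall x, R x -> S x) -> (exists x, ~ S x) ->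
    forall x, S x -> R x.

Definition unit_in (R : D -> Prop) (a : D) : Prop :=
  exists b, R b /\ a * b = 1 /\ b * a = 1.

Definition normalizes (R : D -> Prop) (x : D) : Prop :=
  forall y, (exists r, R r /\ y = x * r) <-> (exists r, R r /\ y = r * x).

Definition N_of (R : D -> Prop) (x : D) : Prop := normalizes R x.

Definition left_ideal (R I : D -> Prop) : Prop :=
  (forall x, I x -> R x) /\ I 0 /\ (forall x y, I x -> I y -> I (x - y)) /\
  (forall r x, R r -> I x -> I (r * x)).
Definition right_ideal (R I : D -> Prop) : Prop :=
  (forall x, I x -> R x) /\ I 0 /\ (forall x y, I x -> I y -> I (x - y)) /\
  (forall r x, R r -> I x -> I (x * r)).
Definition ideal (R I : D -> Prop) : Prop := left_ideal R I /\ right_ideal R I.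

Definition nonzero_set (I : D -> Prop) : Prop := exists x, I x /\ x != 0.
Definition proper_in (R I : D -> Prop) : Prop := exists x, R x /\ ~ I x.

(* prime ideal of R: proper two-sided ideal P with  A B <= P  ==> A <= P or B <= P
   for two-sided ideals A, B (A B <= P iff all products x y lie in P, P additive) *)
Definition prime_ideal (R P : D -> Prop) : Prop :=
  ideal R P /\ proper_in R P /\
  forall A B, ideal R A -> ideal R B ->
    (forall x y, A x -> B y -> P (x * y)) ->
    (forall x, A x -> P x) \/ (forall x, B x -> P x).

Definition maximal_left_ideal (R M : D -> Prop) : Prop :=
  left_ideal R M /\ proper_in R M /\
  forall I, left_ideal R I -> proper_in R I -> (forall x, M x -> I x) ->
    forall x, I x -> M x.

Definition jacobson (R : D -> Prop) (x : D) : Prop :=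
  R x /\ forall M, maximal_left_ideal R M -> M x.

Definition mult_subset (R X : D -> Prop) : Prop :=
  (forall x, X x -> R x) /\ X 1 /\ (forall x y, X x -> X y -> X (x * y)).
Definition left_ore_set (R X : D -> Prop) : Prop :=
  mult_subset R X /\
  (forall r x, R r -> X x -> exists r' x', R r' /\ X x' /\ x' * r = r' * x) /\
  (forall r x, R r -> X x -> r * x = 0 -> exists x', X x' /\ x' * r = 0).
Definition right_ore_set (R X : D -> Prop) : Prop :=
  mult_subset R X /\
  (forall r x, R r -> X x -> exists r' x', R r' /\ X x' /\ r * x' = x * r') /\
  (forall r x, R r -> X x -> x * r = 0 -> exists x', X x' /\ r * x' = 0).

(* uniform dimension 1: R contains a nonzero (left/right) ideal, and no two
   nonzero (left/right) ideals form a direct sum *)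
Definition udim_left_one (R : D -> Prop) : Prop :=
  (exists I, left_ideal R I /\ nonzero_set I) /\
  forall I J, left_ideal R I -> left_ideal R J -> nonzero_set I -> nonzero_set J ->
    exists x, x != 0 /\ I x /\ J x.
Definition udim_right_one (R : D -> Prop) : Prop :=
  (exists I, right_ideal R I /\ nonzero_set I) /\
  forall I J, right_ideal R I -> right_ideal R J -> nonzero_set I -> nonzero_set J ->
    exists x, x != 0 /\ I x /\ J x.

Definition domain_in (R : D -> Prop) : Prop :=
  forall x y, R x -> R y -> x * y = 0 -> x = 0 \/ y = 0.
Definition left_ore_cond (R : D -> Prop) : Prop :=
  forall x y, R x -> R y -> y != 0 -> exists r s, R r /\ R s /\ s != 0 /\ s * x = r * y.
Definition right_ore_cond (R : D -> Prop) : Prop :=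
  forall x y, R x -> R y -> y != 0 -> exists r s, R r /\ R s /\ s != 0 /\ x * s = y * r.
Definition ore_domain_with_quotients (R : D -> Prop) : Prop :=
  domain_in R /\ left_ore_cond R /\ right_ore_cond R /\
  (forall s, R s -> s != 0 -> s \is a GRing.unit) /\
  (forall d, exists r s, R r /\ R s /\ s != 0 /\ d = s^-1 * r) /\
  (forall d, exists r s, R r /\ R s /\ s != 0 /\ d = r * s^-1).

Definition non_simple (R : D -> Prop) : Prop :=
  exists I, ideal R I /\ nonzero_set I /\ proper_in R I.

Definition G_domain (R : D -> Prop) : Prop :=
  domain_in R /\
  exists x, x != 0 /\ R x /\ forall P, prime_ideal R P -> nonzero_set P -> P x.

End Defs.

From mathcomp Require Import all_boot all_algebra.
From Stdlib Require Import Classical ClassicalEpsilon.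
Import GRing.Theory.
Local Open Scope ring_scope.
Set Implicit Arguments. Unset Strict Implicit.

(* Since aR = Ra, the fractions a^-n r form a subring of D containing a^-1, which
   is not in R, so by maximality D = X^-1 R = R X^-1.  Writing x^-1 = a^-n r for a
   nonzero x in a left ideal gives a^n = r x, so every nonzero one-sided ideal
   contains a power of a; this yields (2), (3) and (5).  If c is in R, the left
   ideal R(1 - ca) contains some a^k, and a^k = a^k (1 - ca) + c' a^(k+1) lets us
   descend to 1, so 1 - ca is a unit of R and a is in J(R).  For (6), a normalizing
   l outside R generates R[l] = D, so m = l^-1 satisfies m^N in R + mR + ... +
   m^(N-1)R; if m were not in R either, D = R[m] would be a finitely generated
   right R-module with D = Da and a in J(R), which Nakayama's lemma forbids. *)

Section DivisionRing.
Variable D : unitRingType.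
Hypothesis hdiv : is_division_ring D.

Lemma division_mul_eq0 (x y : D) : x * y = 0 -> x = 0 \/ y = 0.
Proof.
move=> xy0; have [->|/hdiv xU] := eqVneq x 0; [by left | right].
by rewrite -(mulKr xU y) xy0 mulr0.
Qed.

Lemma division_mul_eq1C (x y : D) : y * x = 1 -> x * y = 1.
Proof.
move=> yx1; have xU : x \is a GRing.unit.
  by apply: hdiv; apply/eqP => x0; move: yx1; rewrite x0 mulr0 => /eqP; rewrite eq_sym oner_eq0.
by rewrite -(mulrK xU y) yx1 mul1r mulrV.
Qed.

End DivisionRing.

Definition left_stabilizer (D : unitRingType) (P : D -> Prop) (y : D) : Prop :=
  forall d, P d -> P (y * d).

Lemma left_stabilizer_subring (D : unitRingType) (P : D -> Prop) :
  (forall d e, P d -> P e -> P (d - e)) -> is_subring (left_stabilizer P).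
Proof.
move=> PB; split; first by move=> d Pd; rewrite mul1r.
split; first by move=> y z Py Pz d Pd; rewrite mulrBl; apply: PB; [apply: Py | apply: Pz].
by move=> y z Py Pz d Pd; rewrite -mulrA; apply/Py/Pz.
Qed.

Section Subring.
Variables (D : unitRingType) (R : D -> Prop).

Definition xR_sub_Rx (x : D) : Prop := forall r, R r -> exists2 r', R r' & x * r = r' * x.
Definition Rx_sub_xR (x : D) : Prop := forall r, R r -> exists2 r', R r' & r * x = x * r'.

Lemma normalizes_xR_sub_Rx x : normalizes R x -> xR_sub_Rx x.
Proof. by move=> nx r Rr; have [|r' [Rr' e]] := proj1 (nx (x * r)); [exists r | exists r']. Qed.

Lemma normalizes_Rx_sub_xR x : normalizes R x -> Rx_sub_xR x.
Proof. by move=> nx r Rr; have [|r' [Rr' e]] := proj2 (nx (r * x)); [exists r | exists r']. Qed.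

Lemma xR_sub_RxX x n : xR_sub_Rx x -> xR_sub_Rx (x ^+ n).
Proof.
move=> xR; elim: n => [|n IHn] r Rr; first by exists r; rewrite // expr0 mulr1 mul1r.
have [r1 Rr1 e1] := IHn r Rr; have [r2 Rr2 e2] := xR r1 Rr1.
by exists r2; rewrite // exprS -mulrA e1 mulrA e2 mulrA.
Qed.

Lemma Rx_sub_xRX x n : Rx_sub_xR x -> Rx_sub_xR (x ^+ n).
Proof.
move=> Rx; elim: n => [|n IHn] r Rr; first by exists r; rewrite // expr0 mulr1 mul1r.
have [r1 Rr1 e1] := Rx r Rr; have [r2 Rr2 e2] := IHn r1 Rr1.
by exists r2; rewrite // exprS mulrA e1 -mulrA e2 mulrA.
Qed.

Lemma xR_sub_RxV x : x \is a GRing.unit -> Rx_sub_xR x -> xR_sub_Rx x^-1.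
Proof.
move=> xU Rx r Rr; have [r' Rr' e] := Rx r Rr; exists r' => //.
by apply: (mulIr xU); rewrite mulrVK // -mulrA e mulKr.
Qed.

Lemma Rx_sub_xRV x : x \is a GRing.unit -> xR_sub_Rx x -> Rx_sub_xR x^-1.
Proof.
move=> xU xR r Rr; have [r' Rr' e] := xR r Rr; exists r' => //.
by apply: (mulrI xU); rewrite mulVKr // mulrA e mulrK.
Qed.

Definition left_multiples (x y : D) : Prop := exists2 r, R r & y = r * x.
Definition right_multiples (x y : D) : Prop := exists2 r, R r & y = x * r.
Definition powers (x y : D) : Prop := exists n : nat, y = x ^+ n.

Definition right_span (g : nat -> D) (k : nat) (d : D) : Prop :=
  exists2 r : nat -> D, (forall j, R (r j)) & d = \sum_(j < k) g j * r j.
Definition pow_span (x : D) : nat -> D -> Prop := right_span (fun j => x ^+ j).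
Definition adjoin (x d : D) : Prop := exists N, pow_span x N d.

Hypothesis sR : is_subring R.

Lemma subring1 : R 1. Proof. by case: sR. Qed.
Lemma subringB x y : R x -> R y -> R (x - y). Proof. by case: sR => _ [sB _]; apply: sB. Qed.
Lemma subringM x y : R x -> R y -> R (x * y). Proof. by case: sR => _ [_ sM]; apply: sM. Qed.
Lemma subring0 : R 0. Proof. by rewrite -(subrr 1); apply: subringB subring1 subring1. Qed.
Lemma subringN x : R x -> R (- x).
Proof. by move=> Rx; rewrite -sub0r; apply: subringB subring0 Rx. Qed.
Lemma subringD x y : R x -> R y -> R (x + y).
Proof. by move=> Rx Ry; rewrite -(opprK y); apply/subringB/subringN. Qed.
Lemma subringX x n : R x -> R (x ^+ n).
Proof.
by move=> Rx; elim: n => [|n IHn]; rewrite ?expr0 ?exprS; [exact: subring1 | exact: subringM].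
Qed.

Lemma subring_nonzero : nonzero_set R.
Proof. by exists 1; split; [exact: subring1 | exact: oner_neq0]. Qed.

Lemma subring_left_ideal : left_ideal R R.
Proof. by split=> //; split; [exact: subring0 | split; [exact: subringB | exact: subringM]]. Qed.

Lemma subring_right_ideal : right_ideal R R.
Proof.
split=> //; split; first exact: subring0.
by split=> [|r x Rr Rx]; [exact: subringB | exact: subringM].
Qed.

Lemma mult_subset_powers x : R x -> mult_subset R (powers x).
Proof.
move=> Rx; split; first by move=> y [n ->]; exact: subringX.
split; first by exists 0%N; rewrite expr0.
by move=> y z [n ->] [m ->]; exists (n + m)%N; rewrite exprD.
Qed.

Lemma left_multiples_left_ideal x : R x -> left_ideal R (left_multiples x).
Proof.
move=> Rx; split; first by move=> y [r Rr ->]; exact: subringM.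
split; first by exists 0; rewrite ?mul0r //; exact: subring0.
split; first by move=> y z [r Rr ->] [s Rs ->]; exists (r - s); rewrite ?mulrBl //; exact: subringB.
by move=> s y Rs [r Rr ->]; exists (s * r); rewrite ?mulrA //; exact: subringM.
Qed.

Lemma right_multiples_ideal x : R x -> Rx_sub_xR x -> ideal R (right_multiples x).
Proof.
move=> Rx Rx_xR.
have xRR y : right_multiples x y -> R y by move=> [r Rr ->]; exact: subringM.
have xR0 : right_multiples x 0 by exists 0; rewrite ?mulr0 //; exact: subring0.
have xRB y z : right_multiples x y -> right_multiples x z -> right_multiples x (y - z).
  by move=> [r Rr ->] [s Rs ->]; exists (r - s); rewrite ?mulrBr //; exact: subringB.
split; split=> //; split=> //; split=> // s y Rs [r Rr ->].
  by have [s' Rs' e] := Rx_xR s Rs; exists (s' * r); rewrite ?mulrA ?e //; exact: subringM.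
by exists (r * s); rewrite ?mulrA //; exact: subringM.
Qed.

Lemma right_span_add g k d e : right_span g k d -> right_span g k e -> right_span g k (d + e).
Proof.
move=> [r Rr ->] [s Rs ->]; exists (fun j => r j + s j); first by move=> j; exact: subringD.
by rewrite -big_split; apply: eq_bigr => j _; rewrite mulrDr.
Qed.

Lemma right_span_sub g k d e : right_span g k d -> right_span g k e -> right_span g k (d - e).
Proof.
move=> [r Rr ->] [s Rs ->]; exists (fun j => r j - s j); first by move=> j; exact: subringB.
by rewrite -sumrB; apply: eq_bigr => j _; rewrite mulrBr.
Qed.

Lemma right_span_rmul g k s d : R s -> right_span g k d -> right_span g k (d * s).
Proof.
move=> Rs [r Rr ->]; exists (fun j => r j * s); first by move=> j; exact: subringM.
by rewrite mulr_suml; apply: eq_bigr => j _; rewrite mulrA.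
Qed.

Lemma right_span_widen g k m d : (k <= m)%N -> right_span g k d -> right_span g m d.
Proof.
move=> km [r Rr ->]; exists (fun j => if (j < k)%N then r j else 0).
  by move=> j; case: (j < k)%N; [exact: Rr | exact: subring0].
rewrite (big_ord_widen m (fun j => g j * r j) km) big_mkcond.
by apply: eq_bigr => j _; case: (j < k)%N; rewrite ?mulr0.
Qed.

Lemma right_span_reduce g k d : right_span g k (g k) -> right_span g k.+1 d -> right_span g k d.
Proof.
move=> gk [r Rr ->]; rewrite big_ord_recr /=.
by apply: right_span_add; [exists r | exact: right_span_rmul].
Qed.

Lemma pow_span_one x N : pow_span x N.+1 1.
Proof.
apply: (@right_span_widen _ 1) => //.
by exists (fun=> 1); [move=> _; exact: subring1 | rewrite big_ord1 expr0 mulr1].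
Qed.

Lemma pow_span_shift x N d : pow_span x N d -> pow_span x N.+1 (x * d).
Proof.
move=> [r Rr ->]; exists (fun j => if j is j'.+1 then r j' else 0).
  by case=> [|j] //; exact: subring0.
rewrite big_ord_recl /= mulr0 add0r mulr_sumr; apply: eq_bigr => j _.
by rewrite exprS mulrA.
Qed.

Lemma pow_span_lmul x N s d : Rx_sub_xR x -> R s -> pow_span x N d -> pow_span x N (s * d).
Proof.
move=> Rx_xR Rs [r Rr ->].
have [f Rf] : exists f : nat -> D, forall j, R (f j) /\ s * x ^+ j = x ^+ j * f j.
  apply: (choice (fun j y => R y /\ s * x ^+ j = x ^+ j * y)) => j.
  by have [s' Rs' e] := Rx_sub_xRX j Rx_xR Rs; exists s'.
exists (fun j => f j * r j); first by move=> j; apply: subringM => //; case: (Rf j).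
rewrite mulr_sumr; apply: eq_bigr => j _.
by case: (Rf j) => _ e; rewrite mulrA e mulrA.
Qed.

Lemma pow_span_inv x K : x \is a GRing.unit ->
  pow_span x K.+1 x^-1 -> pow_span x^-1 K.+1 (x^-1 ^+ K.+1).
Proof.
(* x^-(K+1) = x^-K x^-1 = \sum_j x^-K x^j r j = \sum_j x^-(K-j) r j *)
move=> xU [r Rr xV]; exists (fun j => r (K - j)%N) => //.
rewrite exprSr {2}xV mulr_sumr (reindex_inj rev_ord_inj) /=; apply: eq_bigr => j _.
have jK : (j <= K)%N by rewrite -ltnS.
rewrite subSS mulrA -{1}(subnKC jK) exprD [x^-1 ^+ (K - j)]exprVn mulrVK //.
exact: unitrX.
Qed.

Lemma adjoin_sub x d e : adjoin x d -> adjoin x e -> adjoin x (d - e).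
Proof.
move=> [N xd] [M xe]; exists (N + M)%N.
apply: right_span_sub; apply: right_span_widen.
- exact: leq_addr.
- exact: xd.
- exact: leq_addl.
- exact: xe.
Qed.

End Subring.

Section MaximalSubring.
Variables (D : unitRingType) (R : D -> Prop).
Hypothesis hmax : maximal_subring R.

Lemma maximal_subring_full S y :
  is_subring S -> (forall x, R x -> S x) -> S y -> ~ R y -> forall d, S d.
Proof.
move=> sS RS Sy nRy d; apply: NNPP => nSd; case: hmax => _ [_ maxR].
by apply: nRy; apply: (maxR S sS RS _ y Sy); exists d.
Qed.

Lemma left_stabilizer_full P y :
  (forall d e, P d -> P e -> P (d - e)) -> (forall r, R r -> left_stabilizer P r) ->
  left_stabilizer P y -> ~ R y -> P 1 -> forall d, P d.
Proof.
move=> PB RP Py nRy P1 d; rewrite -[d]mulr1.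
exact: (maximal_subring_full (left_stabilizer_subring PB) RP Py nRy d 1 P1).
Qed.

End MaximalSubring.

Section Fractions.
Variables (D : unitRingType) (R : D -> Prop) (a : D).
Hypotheses (sR : is_subring R) (Ra : R a) (aU : a \is a GRing.unit) (aR_Ra : xR_sub_Rx R a).

Definition left_fractions (d : D) : Prop := exists (n : nat) (r : D), R r /\ d = a ^- n * r.

Lemma left_fractions_subring : is_subring left_fractions.
Proof.
have aXU n : a ^+ n \is a GRing.unit by exact: unitrX.
split; first by exists 0%N, 1; rewrite expr0 invr1 mul1r; split=> //; exact: subring1.
split=> [_ _ [n [r [Rr ->]]] [m [s [Rs ->]]] | _ _ [n [r [Rr ->]]] [m [s [Rs ->]]]].
  exists (n + m)%N, (a ^+ m * r - a ^+ n * s); split.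
    by apply: (subringB sR); apply: (subringM sR) => //; exact: subringX.
  have shift p q : a ^- (p + q) * a ^+ q = a ^- p.
    by rewrite addnC exprD invrM // mulrVK.
  by rewrite mulrBr !mulrA shift addnC shift.
have [r' Rr' e] := Rx_sub_xRV (aXU m) (xR_sub_RxX m aR_Ra) Rr.
exists (m + n)%N, (r' * s); split; first exact: subringM.
by rewrite -mulrA (mulrA r) e -!mulrA mulrA -invrM // -exprD addnC.
Qed.

End Fractions.

Section Nakayama.
Variables (D : unitRingType) (R : D -> Prop) (a : D).
Hypotheses (sR : is_subring R) (Ra : R a) (aU : a \is a GRing.unit).
Hypothesis unit_1_sub : forall c, R c -> unit_in R (1 - c * a).

Lemma right_span_last g k : (forall d, right_span R g k.+1 d) -> right_span R g k (g k).
Proof.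
(* Expanding g k * a^-1 gives g k (1 - c a) = S a, and 1 - c a is a unit of R. *)
move=> spanD; have [c Rc gkV] := spanD (g k * a^-1); rewrite big_ord_recr /= in gkV.
set S := \sum_(j < k) g j * c j in gkV.
have [w [Rw [uw _]]] := unit_1_sub (Rc k).
have gk : g k = (S + g k * c k) * a by rewrite -gkV mulrVK.
have gku : g k * (1 - c k * a) = S * a by rewrite mulrBr mulr1 mulrA {1}gk mulrDl addrK.
have -> : g k = S * (a * w) by rewrite mulrA -gku -mulrA uw mulr1.
by apply: (right_span_rmul sR); [exact: subringM | exists c].
Qed.

Lemma right_span_not_full g k : ~ (forall d, right_span R g k d).
Proof.
elim: k => [|k IHk] spanD.
  by have [r _] := spanD 1; rewrite big_ord0 => /eqP; rewrite oner_eq0.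
apply: IHk => d; apply: right_span_reduce (spanD d) => //.
exact: right_span_last.
Qed.

End Nakayama.

Section MaximalSubringOfDivisionRing.
Variables (D : unitRingType) (R : D -> Prop) (a : D).
Hypotheses (hdiv : is_division_ring D) (hmax : maximal_subring R).
Hypotheses (Ra : R a) (a0 : a != 0) (anu : ~ unit_in R a) (anorm : normalizes R a).

Let sR : is_subring R := proj1 hmax.
Let aU : a \is a GRing.unit := hdiv a0.
Let aR_Ra : xR_sub_Rx R a := normalizes_xR_sub_Rx anorm.
Let Ra_aR : Rx_sub_xR R a := normalizes_Rx_sub_xR anorm.

Lemma expa_neq0 n : a ^+ n != 0.
Proof. by apply/eqP => an0; move: (unitrX n aU); rewrite an0 unitr0. Qed.

Lemma mul_a_neq1 r : R r -> r * a != 1.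
Proof.
move=> Rr; apply/eqP => ra1; apply: anu; exists r; split=> //; split=> //.
exact: (division_mul_eq1C hdiv ra1).
Qed.

Lemma left_fractions_full d : exists (n : nat) (r : D), R r /\ d = a ^- n * r.
Proof.
have aV : left_fractions R a a^-1.
  by exists 1%N, 1; rewrite expr1 mulr1; split=> //; exact: subring1.
have RS x : R x -> left_fractions R a x.
  by move=> Rx; exists 0%N, x; rewrite expr0 invr1 mul1r.
apply: (maximal_subring_full hmax (left_fractions_subring sR Ra aU aR_Ra) RS aV) => RaV.
by apply: anu; exists a^-1; rewrite mulrV // mulVr.
Qed.

Lemma right_fractions_full d : exists (n : nat) (r : D), R r /\ d = r * a ^- n.
Proof.
have [n [r [Rr ->]]] := left_fractions_full d.
have [r' Rr' e] := xR_sub_RxV (unitrX n aU) (Rx_sub_xRX n Ra_aR) Rr.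
by exists n, r'.
Qed.

Lemma left_ideal_has_pow I : left_ideal R I -> nonzero_set I -> exists n, I (a ^+ n).
Proof.
move=> [_ [_ [_ IM]]] [x [Ix x0]]; have [n [r [Rr xV]]] := left_fractions_full x^-1.
exists n; have -> : a ^+ n = r * x.
  by rewrite -[r](mulVKr (unitrX n aU)) -xV mulrVK // hdiv.
exact: IM.
Qed.

Lemma right_ideal_has_pow I : right_ideal R I -> nonzero_set I -> exists n, I (a ^+ n).
Proof.
move=> [_ [_ [_ IM]]] [x [Ix x0]]; have [n [r [Rr xV]]] := right_fractions_full x^-1.
exists n; have -> : a ^+ n = x * r.
  by rewrite -[r](mulrVK (unitrX n aU)) -xV mulVKr // hdiv.
exact: IM.
Qed.

Lemma udim_left_one_R : udim_left_one R.
Proof.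
split; first by exists R; split; [exact: subring_left_ideal | exact: subring_nonzero].
move=> I J IL JL I0 J0.
have [n In] := left_ideal_has_pow IL I0; have [m Jm] := left_ideal_has_pow JL J0.
case: IL JL => _ [_ [_ IM]] [_ [_ [_ JM]]].
exists (a ^+ (m + n)); split; first exact: expa_neq0.
split; [rewrite exprD | rewrite addnC exprD]; [apply: IM | apply: JM] => //.
  all: exact: subringX.
Qed.

Lemma udim_right_one_R : udim_right_one R.
Proof.
split; first by exists R; split; [exact: subring_right_ideal | exact: subring_nonzero].
move=> I J IR JR I0 J0.
have [n In] := right_ideal_has_pow IR I0; have [m Jm] := right_ideal_has_pow JR J0.
case: IR JR => _ [_ [_ IM]] [_ [_ [_ JM]]].
exists (a ^+ (n + m)); split; first exact: expa_neq0.
split; [rewrite exprD | rewrite addnC exprD]; [apply: IM | apply: JM] => //.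
  all: exact: subringX.
Qed.

Lemma ore_domain_R : ore_domain_with_quotients R.
Proof.
split; first by move=> x y _ _; exact: division_mul_eq0.
split.
  move=> x y Rx Ry y0; have [n [r [Rr e]]] := left_fractions_full (x * y^-1).
  exists r, (a ^+ n); do !split=> //; [exact: subringX | exact: expa_neq0 |].
  by rewrite -[r](mulVKr (unitrX n aU)) -e !mulrA mulrVK // hdiv.
split.
  move=> x y Rx Ry y0; have [n [r [Rr e]]] := right_fractions_full (y^-1 * x).
  exists r, (a ^+ n); do !split=> //; [exact: subringX | exact: expa_neq0 |].
  by rewrite -[r](mulrVK (unitrX n aU)) -e !mulrA mulrV ?mul1r // hdiv.
split; first by move=> s _; exact: hdiv.
split=> d;
  [have [n [r [Rr e]]] := left_fractions_full d | have [n [r [Rr e]]] := right_fractions_full d];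
  by exists r, (a ^+ n); do !split=> //; [exact: subringX | exact: expa_neq0].
Qed.

Lemma left_ore_set_powers : left_ore_set R (powers a).
Proof.
split; first exact: mult_subset_powers.
split=> [r _ Rr [n ->] | r _ Rr [n ->] /(division_mul_eq0 hdiv) [-> | an0]].
- have [r' Rr' e] := xR_sub_RxX n aR_Ra Rr.
  by exists r', (a ^+ n); do !split=> //; exists n.
- by exists 1; split; [exists 0%N; rewrite expr0 | rewrite mulr0].
- by have := expa_neq0 n; rewrite an0 eqxx.
Qed.

Lemma right_ore_set_powers : right_ore_set R (powers a).
Proof.
split; first exact: mult_subset_powers.
split=> [r _ Rr [n ->] | r _ Rr [n ->] /(division_mul_eq0 hdiv) [an0 | ->]].
- have [r' Rr' e] := Rx_sub_xRX n Ra_aR Rr.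
  by exists r', (a ^+ n); do !split=> //; exists n.
- by have := expa_neq0 n; rewrite an0 eqxx.
- by exists 1; split; [exists 0%N; rewrite expr0 | rewrite mul0r].
Qed.

Lemma prime_ideal_has_a P : prime_ideal R P -> nonzero_set P -> P a.
Proof.
move=> [[PL PR] [_ Pprime]] P0; have [n] := left_ideal_has_pow PL P0.
have PM r x : R r -> P x -> P (x * r) by case: PR => _ [_ [_]]; apply.
have xR1 x : right_multiples R x x by exists 1; rewrite ?mulr1 //; exact: subring1.
elim: n => [|k IHk] Pak; first by rewrite expr0 in Pak; rewrite -[a]mul1r; apply: PM.
have aRakR x y : right_multiples R a x -> right_multiples R (a ^+ k) y -> P (x * y).
  move=> [r Rr ->] [s Rs ->]; have [r' Rr' e] := Rx_sub_xRX k Ra_aR Rr.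
  rewrite -mulrA (mulrA r) e -mulrA mulrA -exprS.
  by apply: PM => //; exact: subringM.
have aRI := right_multiples_ideal sR Ra Ra_aR.
have akRI := right_multiples_ideal sR (subringX sR k Ra) (Rx_sub_xRX k Ra_aR).
by case: (Pprime _ _ aRI akRI aRakR) => [PaR | PakR]; [apply/PaR/xR1 | apply/IHk/PakR/xR1].
Qed.

Lemma left_ideal_one L c k : left_ideal R L -> R c -> L (1 - c * a) -> L (a ^+ k) -> L 1.
Proof.
move=> [_ [_ [LB LM]]] Rc Lu; elim: k => [|k IHk] Lak; first by rewrite expr0 in Lak.
apply: IHk; have [c' Rc' e] := xR_sub_RxX k aR_Ra Rc.
have -> : a ^+ k = a ^+ k * (1 - c * a) - (- c') * a ^+ k.+1.
  by rewrite mulrBr mulr1 mulrA e exprSr mulNr opprK mulrA subrK.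
by apply: LB; apply: LM => //; [exact: subringX | exact: subringN].
Qed.

Lemma unit_in_1_sub_mul c : R c -> unit_in R (1 - c * a).
Proof.
move=> Rc; set u := 1 - c * a.
have Ru : R u by apply: (subringB sR); [exact: subring1 | exact: subringM].
have Lu : left_multiples R u u by exists 1; rewrite ?mul1r //; exact: subring1.
have u0 : u != 0 by rewrite subr_eq0 eq_sym; exact: mul_a_neq1.
have uL := left_multiples_left_ideal sR Ru.
have [k Lak] := left_ideal_has_pow uL (ex_intro _ u (conj Lu u0)).
have [w Rw wu] := left_ideal_one uL Rc Lu Lak.
by exists w; split=> //; split; [exact: (division_mul_eq1C hdiv (esym wu)) | exact: esym wu].
Qed.

Lemma jacobson_a : jacobson R a.
Proof.
split=> // M [[MR [M0 [MB MM]]] [[x [Rx nMx]] maxM]]; apply: NNPP => nMa.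
pose I y := exists m r, M m /\ R r /\ y = m + r * a.
have IL : left_ideal R I.
  split.
    by move=> _ [m [r [Mm [Rr ->]]]]; apply: (subringD sR); [exact: MR | exact: subringM].
  split; first by exists 0, 0; rewrite mul0r addr0; do !split=> //; exact: subring0.
  split=> [_ _ [m [r [Mm [Rr ->]]]] [m' [r' [Mm' [Rr' ->]]]] | s _ Rs [m [r [Mm [Rr ->]]]]].
    exists (m - m'), (r - r'); rewrite mulrBl opprD addrACA.
    by do !split=> //; [exact: MB | exact: subringB].
  exists (s * m), (s * r); rewrite mulrDr mulrA.
  by do !split=> //; [exact: MM | exact: subringM].
have MI y : M y -> I y.
  by move=> My; exists y, 0; rewrite mul0r addr0; do !split=> //; exact: subring0.
have [m [r [Mm [Rr e1]]]] : I 1.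
  apply: NNPP => nI1; apply: nMa; apply: (maxM I IL _ MI).
    by exists 1; split=> //; exact: subring1.
  by exists 0, 1; rewrite mul1r add0r; do !split=> //; exact: subring1.
have [w [Rw [_ wm]]] := unit_in_1_sub_mul Rr.
have um : 1 - r * a = m by rewrite e1 addrK.
rewrite um in wm; apply: nMx; rewrite -[x]mulr1 -wm mulrA.
by apply: MM => //; exact: subringM.
Qed.

Lemma non_simple_R : non_simple R.
Proof.
exists (right_multiples R a); split; first exact: right_multiples_ideal.
split; first by exists a; split; [exists 1; rewrite ?mulr1 //; exact: subring1 | exact: a0].
exists 1; split; first exact: subring1.
move=> [r Rr ar1]; apply: anu; exists r; split=> //.
by split; [exact: esym ar1 | exact: (division_mul_eq1C hdiv (esym ar1))].
Qed.

Lemma G_domain_R : G_domain R.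
Proof.
split; first by move=> x y _ _; exact: division_mul_eq0.
by exists a; do !split=> //; exact: prime_ideal_has_a.
Qed.

Lemma normalizer_inv_in_adjoin l : normalizes R l -> ~ R l -> exists N, pow_span R l N l^-1.
Proof.
move=> nl nRl.
have Radj r : R r -> left_stabilizer (adjoin R l) r.
  by move=> Rr d [N ld]; exists N; exact: (pow_span_lmul sR (normalizes_Rx_sub_xR nl) Rr ld).
have ladj : left_stabilizer (adjoin R l) l.
  by move=> d [N ld]; exists N.+1; exact: (pow_span_shift sR ld).
have adj1 : adjoin R l 1 by exists 1%N; exact: (pow_span_one sR).
exact: (left_stabilizer_full hmax (@adjoin_sub _ _ sR l) Radj ladj nRl adj1 l^-1).
Qed.

Lemma normalizer_in_or_inv l : N_of R l -> R l \/ R l^-1.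
Proof.
move=> nl; have [->|l0] := eqVneq l 0; first by left; exact: subring0.
have [Rl|nRl] := classic (R l); [by left | right].
have lU := hdiv l0.
have [K lV] : exists K, pow_span R l K.+1 l^-1.
  have [N lV] := normalizer_inv_in_adjoin nl nRl.
  by exists N; exact: (right_span_widen sR (leqnSn N) lV).
have lVK := pow_span_inv lU lV.
apply: NNPP => nRlV.
have Rstab r : R r -> left_stabilizer (pow_span R l^-1 K.+1) r.
  by move=> Rr d; apply: (pow_span_lmul sR) (Rx_sub_xRV lU (normalizes_xR_sub_Rx nl)) Rr.
have lVstab : left_stabilizer (pow_span R l^-1 K.+1) l^-1.
  by move=> d /(pow_span_shift sR); apply: (right_span_reduce sR) lVK.
apply: (right_span_not_full sR Ra aU unit_in_1_sub_mul (k := K.+1)).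
apply: (left_stabilizer_full hmax _ Rstab lVstab nRlV (pow_span_one sR _ K)).
exact: right_span_sub.
Qed.

End MaximalSubringOfDivisionRing.

Theorem theorem2p4 (D : unitRingType) (R : D -> Prop) (a : D) :
  is_division_ring D -> noncommutative D -> maximal_subring R ->
  R a -> a != 0 -> ~ unit_in R a -> normalizes R a ->
  let X := fun y : D => exists n : nat, y = a ^+ n in
  (* (1) *)
  (left_ore_set R X /\ right_ore_set R X /\
   (forall d : D, exists (n : nat) (r : D), R r /\ d = a ^- n * r) /\
   (forall d : D, exists (n : nat) (r : D), R r /\ d = r * a ^- n)) /\
  (* (2) *)
  ((forall I, left_ideal R I -> nonzero_set I -> exists n : nat, I (a ^+ n)) /\
   (forall I, right_ideal R I -> nonzero_set I -> exists n : nat, I (a ^+ n)) /\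
   udim_left_one R /\ udim_right_one R /\ ore_domain_with_quotients R) /\
  (* (3) *)
  (forall P, prime_ideal R P -> nonzero_set P -> P a) /\
  (* (4) *)
  jacobson R a /\
  (* (5) *)
  (non_simple R /\ G_domain R) /\
  (* (6) *)
  (forall l : D, N_of R l -> R l \/ R l^-1).
Proof.
move=> hdiv _ hmax Ra a0 anu anorm X.
refine (conj (conj _ (conj _ (conj _ _)))
          (conj (conj _ (conj _ (conj _ (conj _ _))))
                (conj _ (conj _ (conj (conj _ _) _))))).
- by apply: left_ore_set_powers.
- by apply: right_ore_set_powers.
- by apply: left_fractions_full.
- by apply: right_fractions_full.
- by apply: left_ideal_has_pow.
- by apply: right_ideal_has_pow.
- by apply: (udim_left_one_R (a := a)).
- by apply: (udim_right_one_R (a := a)).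
- by apply: (ore_domain_R (a := a)).
- by apply: prime_ideal_has_a.
- by apply: jacobson_a.
- by apply: (non_simple_R (a := a)).
- by apply: (G_domain_R (a := a)).
- by apply: (normalizer_in_or_inv (a := a)).
Qed.
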